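(* Let $I=I_{\mathbf a,\mathbf b}\subset S=K[x,y]$ be a nonzero proper monomial ideal. Then $$\mathrm{v}(I)=\begin{cases}\min\{a_i+b_{i+1}-2: 1\le i\le m-1\}, & \text{if } b_1=0 \text{ and } a_m=0,\\ \min\{a_1+b_1-1,\ a_i+b_{i+1}-2: 1\le i\le m-1\}, & \text{if } b_1\ne0\text{ and } a_m=0,\\ \min\{a_m+b_m-1,\ a_i+b_{i+1}-2: 1\le i\le m-1\}, & \text{if } b_1=0\text{ and } a_m\ne0,\\ \min\{a_1+b_1-1,\ a_m+b_m-1,\ a_i+b_{i+1}-2: 1\le i\le m-1\}, & \text{otherwise}.\end{cases}$$ (When $m=1$ the terms $a_i+b_{i+1}-2$ are absent.)
   Context: $S=K[x,y]$ over a field $K$, standard graded, $S_d$ its degree-$d$ component. Every nonzero monomial ideal $I$ of $S$ has minimal monomial generating set $\{x^{a_1}y^{b_1},\dots,x^{a_m}y^{b_m}\}$ with $a_1>\dots>a_m\ge0$ and $0\le b_1<\dots<b_m$; this is denoted $I=I_{\mathbf a,\mathbf b}$. For a graded ideal $J$, $\mathrm{v}(J)=\min\{d:\exists f\in S_d\text{ with }(J:f)\in\operatorname{Ass}(J)\}$. *)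

From HB Require Import structures.
From mathcomp Require Import all_boot all_order all_algebra.
From mathcomp Require Import mpoly.

Set Implicit Arguments.
Unset Strict Implicit.
Unset Printing Implicit Defensive.

Import GRing.Theory.
Local Open Scope ring_scope.

(* S = K[x,y] is {mpoly K[2]}; x = 'X_0, y = 'X_1.  Ideals are predicates. *)

Definition varx (K : fieldType) : {mpoly K[2]} := 'X_(@Ordinal 2 0 isT).
Definition vary (K : fieldType) : {mpoly K[2]} := 'X_(@Ordinal 2 1 isT).

Definition monoXY (K : fieldType) (a b : nat) : {mpoly K[2]} :=
  varx K ^+ a * vary K ^+ b.

Definition ideal_gen (K : fieldType) (s : seq {mpoly K[2]}) (g : {mpoly K[2]}) : Prop :=
  exists c : 'I_(size s) -> {mpoly K[2]},
    g = \sum_(i < size s) c i * nth 0 s i.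

Definition monideal (K : fieldType) (a b : seq nat) : {mpoly K[2]} -> Prop :=
  ideal_gen [seq monoXY K (nth 0%N a i) (nth 0%N b i) | i <- iota 0 (size a)].

Definition colon (K : fieldType) (J : {mpoly K[2]} -> Prop) (f : {mpoly K[2]})
  : {mpoly K[2]} -> Prop := fun g => J (g * f).

Definition is_ideal (K : fieldType) (P : {mpoly K[2]} -> Prop) : Prop :=
  P 0 /\ (forall g h, P g -> P h -> P (g + h)) /\ (forall r g, P g -> P (r * g)).

Definition is_prime_ideal (K : fieldType) (P : {mpoly K[2]} -> Prop) : Prop :=
  is_ideal P /\ ~ P 1 /\ (forall g h, P (g * h) -> P g \/ P h).

Definition is_assoc (K : fieldType) (J P : {mpoly K[2]} -> Prop) : Prop :=
  is_prime_ideal P /\ exists g, forall h, P h <-> colon J g h.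

Definition vnumber_is (K : fieldType) (J : {mpoly K[2]} -> Prop) (v : nat) : Prop :=
  (exists f : {mpoly K[2]}, f \is v.-homog /\ is_assoc J (colon J f)) /\
  (forall (d : nat) (f : {mpoly K[2]}), f \is d.-homog -> is_assoc J (colon J f) -> (v <= d)%N).

Definition seqmin (s : seq nat) : nat := foldr minn (head 0%N s) s.

(* candidate values of the theorem (0-indexed: a_i = nth 0 a (i-1)) *)
Definition vcands (a b : seq nat) : seq nat :=
  let m := size a in
  (if nth 0%N b 0 != 0%N then [:: nth 0%N a 0 + nth 0%N b 0 - 1]%N else [::]) ++
  (if nth 0%N a m.-1 != 0%N then [:: nth 0%N a m.-1 + nth 0%N b m.-1 - 1]%N else [::]) ++
  [seq (nth 0%N a i + nth 0%N b i.+1 - 2)%N | i <- iota 0 m.-1].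

From HB Require Import structures.
From mathcomp Require Import all_boot all_order all_algebra.
From mathcomp Require Import mpoly.
From mathcomp Require Import zify.

Set Implicit Arguments.
Unset Strict Implicit.
Unset Printing Implicit Defensive.
Import GRing.Theory.

(* A monomial x^p y^q lies in I iff (p,q) lies in the staircase
   {(p,q) | a_k <= p and b_k <= q for some k}; a polynomial lies in I iff its
   whole support does.  The proof has two halves.

   Each candidate value is the degree of a monomial x^p y^q whose
   colon ideal (I : x^p y^q) is one of the coordinate primes (x,y), (y) or (x):
   the inner corners (a_i - 1, b_{i+1} - 1), and, when b_1 > 0 resp. a_m > 0,
   the outer corners (a_1, b_1 - 1) and (a_m - 1, b_m).  Such an ideal is prime
   because it is the kernel of the ring endomorphism of K[x,y] that kills the
   monomials involving the corresponding variables.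

   If (I : f) is prime with f homogeneous of degree d, then f is
   not in I while x^{a_1} y^{b_1} lies in (I : f), so x or y does.  According
   to which of x, y lie in (I : f), some monomial of f (of degree d) sits at an
   inner corner of the staircase or next to one of its two ends, which bounds
   d from below by one of the candidates. *)

Section Staircase.
Variables a b : seq nat.
Local Notation lst := (size a).-1.

Definition stair (p q : nat) : bool :=
  has (fun k => (nth 0 a k <= p) && (nth 0 b k <= q)) (iota 0 (size a)).

Lemma stairP p q :
  reflect (exists2 k, k < size a & nth 0 a k <= p /\ nth 0 b k <= q) (stair p q).
Proof.
apply: (iffP hasP) => [[k] | [k]].
  by rewrite mem_iota add0n => hk /andP [h1 h2]; exists k.
by move=> hk [h1 h2]; exists k; rewrite ?mem_iota ?add0n ?h1 ?h2.
Qed.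

Lemma stair_mono p q p' q' : p <= p' -> q <= q' -> stair p q -> stair p' q'.
Proof.
move=> pp qq /stairP [k hk [h1 h2]]; apply/stairP; exists k => //.
by split; [apply: leq_trans pp | apply: leq_trans qq].
Qed.

Hypothesis a_decr : forall i, i.+1 < size a -> nth 0 a i.+1 < nth 0 a i.
Hypothesis b_incr : forall i, i.+1 < size a -> nth 0 b i < nth 0 b i.+1.

Lemma a_ltn j k : j < k -> k < size a -> nth 0 a k < nth 0 a j.
Proof.
elim: k => // k IH; rewrite ltnS leq_eqVlt => /orP [/eqP -> | jk] ks; first exact: a_decr.
by have := a_decr ks; have := IH jk (ltnW ks); lia.
Qed.

Lemma b_ltn j k : j < k -> k < size a -> nth 0 b j < nth 0 b k.
Proof.
elim: k => // k IH; rewrite ltnS leq_eqVlt => /orP [/eqP -> | jk] ks; first exact: b_incr.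
by have := b_incr ks; have := IH jk (ltnW ks); lia.
Qed.

Lemma a_leq j k : j <= k -> k < size a -> nth 0 a k <= nth 0 a j.
Proof. by rewrite leq_eqVlt => /orP [/eqP -> // | jk] ks; apply/ltnW/a_ltn. Qed.

Lemma b_leq j k : j <= k -> k < size a -> nth 0 b j <= nth 0 b k.
Proof. by rewrite leq_eqVlt => /orP [/eqP -> // | jk] ks; apply/ltnW/b_ltn. Qed.

Lemma stair_inner k p q : k.+1 < size a ->
  stair (nth 0 a k - 1 + p) (nth 0 b k.+1 - 1 + q) = (p != 0) || (q != 0).
Proof.
move=> hk; have ak := a_decr hk; have bk := b_incr hk.
apply/stairP/idP => [[l hl [hp hq]] | ].
  rewrite -negb_and; apply/negP => /andP [/eqP p0 /eqP q0]; subst p q.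
  case: (leqP l k) => hlk; first by have := a_leq hlk (ltnW hk); lia.
  by have := b_leq hlk hl; lia.
case/orP => [p0 | q0]; [exists k; first exact: ltnW | exists k.+1 => //]; lia.
Qed.

Lemma stair_inner_corner p q : ~~ stair p q -> stair p.+1 q -> stair p q.+1 ->
  exists2 k, k.+1 < size a & nth 0 a k + nth 0 b k.+1 - 2 <= p + q.
Proof.
move=> /stairP out /stairP [k hk [k1 k2]] /stairP [l hl [l1 l2]].
have ek : nth 0 a k = p.+1 by case: (leqP (nth 0 a k) p) => h; [case: out; exists k | lia].
have el : nth 0 b l = q.+1 by case: (leqP (nth 0 b l) q) => h; [case: out; exists l | lia].
case: (leqP l k) => hlk; first by have := a_leq hlk hk; lia.
by exists k; [lia | have := b_leq hlk hl; lia].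
Qed.

Lemma stair_first_corner p q : q < nth 0 b 0 -> stair p q.+1 ->
  nth 0 b 0 != 0 /\ nth 0 a 0 + nth 0 b 0 - 1 <= p + q.
Proof.
move=> hq /stairP [[|l] hl [l1 l2]]; first by split; [apply/eqP|]; lia.
by have := b_ltn (ltn0Sn l) hl; lia.
Qed.

Hypothesis a_nil : 0 < size a.

Lemma stair_shift_x p q : stair (nth 0 a 0 + p) q = (nth 0 b 0 <= q).
Proof.
apply/stairP/idP => [[k hk [_ hq]] | hq]; first exact: leq_trans (b_leq (leq0n k) hk) hq.
by exists 0 => //; rewrite leq_addr.
Qed.

Lemma stair_shift_y p q : stair p (nth 0 b lst + q) = (nth 0 a lst <= p).
Proof.
have hl : lst < size a by rewrite prednK.
apply/stairP/idP => [[k hk [hp _]] | hp]; last by exists lst => //; rewrite leq_addr.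
by apply: leq_trans (a_leq _ hl) hp; rewrite -ltnS prednK.
Qed.

Lemma stair_last_corner p q : p < nth 0 a lst -> stair p.+1 q ->
  nth 0 a lst != 0 /\ nth 0 a lst + nth 0 b lst - 1 <= p + q.
Proof.
move=> hp /stairP [k hk [k1 k2]]; have hl : lst < size a by rewrite prednK.
have : k <= lst by rewrite -ltnS prednK.
rewrite leq_eqVlt => /orP [/eqP ek | hkl]; first by subst k; split; [apply/eqP|]; lia.
by have := a_ltn hkl hl; lia.
Qed.
End Staircase.

Lemma seqmin_le (s : seq nat) x : x \in s -> seqmin s <= x.
Proof.
rewrite /seqmin; move: (head 0 s) => z; elim: s => //= y s IH.
by rewrite in_cons geq_min => /orP [/eqP -> | /IH ->]; rewrite ?leqnn ?orbT.
Qed.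

Lemma seqmin_mem (s : seq nat) : s != [::] -> seqmin s \in s.
Proof.
case: s => // y s _; rewrite /seqmin /=.
elim: s => /= [|z s IH]; first by rewrite minnn mem_seq1.
rewrite minnCA {1}/minn; case: ltnP => _; first by rewrite !inE eqxx orbT.
by move: IH; rewrite !inE => /orP [-> | ->]; rewrite ?orbT.
Qed.

Section Candidates.
Variables a b : seq nat.
Local Notation lst := (size a).-1.

Lemma vcands_inner k : k.+1 < size a -> nth 0 a k + nth 0 b k.+1 - 2 \in vcands a b.
Proof.
move=> hk; rewrite /vcands !mem_cat; apply/orP; right; apply/orP; right.
by apply/mapP; exists k => //; rewrite mem_iota; lia.
Qed.

Lemma vcands_first : nth 0 b 0 != 0 -> nth 0 a 0 + nth 0 b 0 - 1 \in vcands a b.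
Proof. by move=> h; rewrite /vcands h mem_cat inE eqxx. Qed.

Lemma vcands_last : nth 0 a lst != 0 -> nth 0 a lst + nth 0 b lst - 1 \in vcands a b.
Proof. by move=> h; rewrite /vcands h !mem_cat inE eqxx orbT. Qed.

Lemma vcands_nonempty : 0 < size a -> ~~ stair a b 0 0 -> vcands a b != [::].
Proof.
move=> size_pos out; suff [x] : exists x, x \in vcands a b by case: (vcands a b).
case hB: (nth 0 b 0 != 0); first by eexists; apply: vcands_first.
case hC: (nth 0 a lst != 0); first by eexists; apply: vcands_last.
case hA: (1 < size a); first by eexists; apply: (@vcands_inner 0).
have lst0 : lst = 0 by lia.
move/negbFE/eqP: hB => b0; move/negbFE/eqP: hC; rewrite lst0 => a0.
by case/stairP: out; exists 0; rewrite ?a0 ?b0.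
Qed.
End Candidates.

Definition i0 : 'I_2 := @Ordinal 2 0 isT.
Definition i1 : 'I_2 := @Ordinal 2 1 isT.

Definition mxy (p q : nat) : 'X_{1..2} :=
  [multinom (if val i == 0 then p else q) | i < 2].

Lemma mxy0 p q : mxy p q i0 = p. Proof. by rewrite mnmE. Qed.
Lemma mxy1 p q : mxy p q i1 = q. Proof. by rewrite mnmE. Qed.

Lemma mnm2P (m1 m2 : 'X_{1..2}) : m1 i0 = m2 i0 -> m1 i1 = m2 i1 -> m1 = m2.
Proof.
move=> h0 h1; apply/mnmP; case=> [[|[|//]] H].
  by rewrite (_ : Ordinal H = i0) //; apply: val_inj.
by rewrite (_ : Ordinal H = i1) //; apply: val_inj.
Qed.

Lemma mdeg2 (m : 'X_{1..2}) : mdeg m = m i0 + m i1.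
Proof.
rewrite mdegE big_ord_recr big_ord_recr big_ord0 /=.
rewrite (_ : ord_max = i1); last exact: val_inj.
by rewrite (_ : widen_ord _ ord_max = i0) //; exact: val_inj.
Qed.

Lemma monoXYE (K : fieldType) p q : monoXY K p q = 'X_[mxy p q].
Proof.
rewrite /monoXY /varx /vary !mpolyXn -mpolyXD; congr 'X_[_].
by apply: mnm2P; rewrite mnmDE !mulmnE !mnm1E ?mxy0 ?mxy1 /= ?mul1n ?mul0n ?addn0.
Qed.

Local Open Scope ring_scope.

Section IdealGen.
Variable K : fieldType.
Implicit Types (s : seq {mpoly K[2]}) (g h r : {mpoly K[2]}).

Lemma ideal_gen0 s : ideal_gen s 0.
Proof. by exists (fun _ => 0); rewrite big1 // => i _; rewrite mul0r. Qed.

Lemma ideal_genD s g h : ideal_gen s g -> ideal_gen s h -> ideal_gen s (g + h).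
Proof.
move=> [c ->] [d ->]; exists (fun i => c i + d i).
by rewrite -big_split; apply: eq_bigr => i _; rewrite mulrDl.
Qed.

Lemma ideal_genM s r g : ideal_gen s g -> ideal_gen s (r * g).
Proof.
move=> [c ->]; exists (fun i => r * c i).
by rewrite mulr_sumr; apply: eq_bigr => i _; rewrite mulrA.
Qed.

Lemma ideal_gen_nth s j : (j < size s)%N -> ideal_gen s (nth 0 s j).
Proof.
move=> hj; exists (fun i => (val i == j)%:R).
rewrite (bigD1 (Ordinal hj)) //= eqxx mul1r big1 ?addr0 // => i hi.
suff /negbTE -> : val i != j by rewrite mul0r.
by apply: contra hi => /eqP h; apply/eqP/val_inj.
Qed.

Lemma ideal_gen_sum s (I : Type) (r : seq I) (P : pred I) (F : I -> {mpoly K[2]}) :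
  (forall i, P i -> ideal_gen s (F i)) -> ideal_gen s (\sum_(i <- r | P i) F i).
Proof. by move=> H; apply: (big_ind (ideal_gen s)); [exact: ideal_gen0 | exact: ideal_genD |]. Qed.

Lemma prime_ideal_pow (P : {mpoly K[2]} -> Prop) g n :
  is_prime_ideal P -> P (g ^+ n) -> P g.
Proof.
move=> [_ [P1 Pmul]]; elim: n => [|n IH]; first by rewrite expr0 => /P1.
by rewrite exprS => /Pmul [].
Qed.
End IdealGen.

Section MonomialIdeal.
Variables (K : fieldType) (a b : seq nat).
Local Notation J := (@monideal K a b).

Definition in_stair (m : 'X_{1..2}) : bool := stair a b (m i0) (m i1).

Definition supp_in_stair (g : {mpoly K[2]}) : bool := all in_stair (msupp g).

Lemma in_stair_shift p q (u : 'X_{1..2}) :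
  in_stair (mxy p q + u) = stair a b (p + u i0)%N (q + u i1)%N.
Proof. by rewrite /in_stair !mnmDE mxy0 mxy1. Qed.

Lemma supp_in_stairD g h :
  supp_in_stair g -> supp_in_stair h -> supp_in_stair (g + h).
Proof.
move=> /allP hg /allP hh; apply/allP => m /msuppD_le.
by rewrite mem_cat => /orP [/hg | /hh].
Qed.

Lemma supp_in_stair_mulX g e :
  supp_in_stair (g * 'X_[e]) = all (fun m => in_stair (e + m)) (msupp g).
Proof. by rewrite /supp_in_stair (perm_all _ (msuppMX _ _)) all_map. Qed.

Lemma nth_monideal_gens i : (i < size a)%N ->
  nth 0 [seq monoXY K (nth 0%N a i) (nth 0%N b i) | i <- iota 0 (size a)] i
  = 'X_[mxy (nth 0%N a i) (nth 0%N b i)].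
Proof. by move=> hi; rewrite (nth_map 0%N) ?size_iota // nth_iota // monoXYE. Qed.

(* The membership criterion: generators have support in the staircase, and
   conversely each monomial of g is a multiple of some generator. *)
Lemma monidealP g : J g <-> supp_in_stair g.
Proof.
split.
  case=> c ->; apply: (big_ind supp_in_stair) => [|g1 g2|i _]; first by rewrite /supp_in_stair msupp0.
    exact: supp_in_stairD.
  have hi : (i < size a)%N.
    by have := ltn_ord i; rewrite [X in (_ < X)%N -> _]size_map size_iota.
  rewrite nth_monideal_gens // supp_in_stair_mulX; apply/allP => m _.
  rewrite in_stair_shift; apply: (@stair_mono _ _ (nth 0%N a i) (nth 0%N b i)); rewrite ?leq_addr //.
  by apply/stairP; exists i.
move=> /allP hg; rewrite (mpolyE g) big_seq; apply: ideal_gen_sum => m hm.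
have /stairP [k hk [h1 h2]] := hg m hm.
have -> : m = (mxy (m i0 - nth 0%N a k)%N (m i1 - nth 0%N b k)%N + mxy (nth 0%N a k) (nth 0%N b k))%MM.
  by apply: mnm2P; rewrite !mnmDE ?mxy0 ?mxy1 subnK.
rewrite mpolyXD scalerAl; apply: ideal_genM.
by rewrite -nth_monideal_gens //; apply: ideal_gen_nth; rewrite size_map size_iota.
Qed.

Lemma monideal_mulXY g p q :
  J (g * monoXY K p q) <-> all (fun u : 'X_{1..2} => stair a b (p + u i0)%N (q + u i1)%N) (msupp g).
Proof.
rewrite monidealP monoXYE supp_in_stair_mulX.
by split=> /allP h; apply/allP => u /h; rewrite in_stair_shift.
Qed.
End MonomialIdeal.

(* Let Z be a predicate on exponents with Z(m1 + m2) = Z m1 && Z m2 (a face of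
   the monoid, whose complement is a prime monoid ideal).  Keeping only the
   monomials with exponent in Z is then a ring endomorphism of K[x_1..x_n]. *)
Section SupportProjection.
Variables (K : fieldType) (n : nat) (Z : pred 'X_{1..n}).
Hypothesis Z_add : forall m1 m2 : 'X_{1..n}, Z (m1 + m2)%MM = Z m1 && Z m2.
Hypothesis Z_0 : Z 0%MM.

Definition mproj (g : {mpoly K[n]}) : {mpoly K[n]} :=
  \sum_(m : 'X_{1..n < msize g}) ((if Z m then g@_m else 0) *: 'X_[m]).

Lemma mprojE g m : (mproj g)@_m = if Z m then g@_m else 0.
Proof.
case: (ltnP (mdeg m) (msize g)) => h.
  by rewrite /mproj (mcoeff_mpoly (fun m : 'X_{1..n} => if Z m then g@_m else 0)).
have -> : g@_m = 0 by apply/eqP; rewrite mcoeff_eq0 msize_mdeg_ge.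
rewrite if_same /mproj raddf_sum big1 //= => i _; rewrite mcoeffZ mcoeffX.
suff /negbTE -> : val i != m by rewrite mulr0.
by apply: contraTneq (bmdeg i) => ->; rewrite -leqNgt.
Qed.

Lemma mprojD g h : mproj (g + h) = mproj g + mproj h.
Proof. by apply/mpolyP => m; rewrite mcoeffD !mprojE mcoeffD; case: (Z m); rewrite ?addr0. Qed.

Lemma mprojM g h : mproj (g * h) = mproj g * mproj h.
Proof.
apply/mpolyP => m; rewrite mprojE !mcoeffM.
case Zm: (Z m).
  apply: eq_bigr => k /eqP e; rewrite !mprojE.
  by rewrite e Z_add in Zm; case/andP: Zm => -> ->.
rewrite big1 // => k /eqP e; rewrite !mprojE.
rewrite e Z_add in Zm; move: Zm.
by case: (Z k.1); case: (Z k.2); rewrite ?mul0r ?mulr0.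
Qed.

Lemma mproj1 : mproj 1 != 0.
Proof.
apply/eqP => /mpolyP /(_ 0%MM); rewrite mprojE Z_0 mcoeff1 eqxx mcoeff0.
by move/eqP; rewrite oner_eq0.
Qed.

Lemma mproj_eq0P g : mproj g = 0 <-> all (fun m => ~~ Z m) (msupp g).
Proof.
split=> [h | /allP h].
  apply/allP => m; rewrite mcoeff_msupp; apply: contra => Zm.
  by move/mpolyP: h => /(_ m); rewrite mprojE Zm mcoeff0 => ->.
apply/mpolyP => m; rewrite mprojE mcoeff0; case Zm: (Z m) => //.
by apply/eqP; rewrite mcoeff_eq0; apply/negP => /h; rewrite Zm.
Qed.
End SupportProjection.

Lemma mproj_kernel_prime (K : fieldType) (Z : pred 'X_{1..2}) (P : {mpoly K[2]} -> Prop) :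
  (forall m1 m2, Z (m1 + m2)%MM = Z m1 && Z m2) -> Z 0%MM ->
  (forall g, P g <-> mproj Z g = 0) -> is_prime_ideal P.
Proof.
move=> Z_add Z_0 hP; have mproj0 : mproj Z (0 : {mpoly K[2]}) = 0.
  by apply/mpolyP => m; rewrite mprojE mcoeff0 if_same.
split; [split; [|split] | split].
- by apply/hP.
- by move=> g h /hP hg /hP hh; apply/hP; rewrite mprojD hg hh addr0.
- by move=> r g /hP hg; apply/hP; rewrite mprojM // hg mulr0.
- by move/hP; apply/eqP/mproj1.
- move=> g h /hP; rewrite mprojM // => /eqP; rewrite mulf_eq0.
  by case/orP => /eqP /hP; [left | right].
Qed.

(* Exponents not involving x (if sx) nor y (if sy); the kernel of the
   associated projection is the prime generated by these variables. *)
Definition avoids (sx sy : bool) : pred 'X_{1..2} :=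
  fun m => (sx ==> (m i0 == 0%N)) && (sy ==> (m i1 == 0%N)).

Lemma avoids_add sx sy (m1 m2 : 'X_{1..2}) :
  avoids sx sy (m1 + m2)%MM = avoids sx sy m1 && avoids sx sy m2.
Proof.
rewrite /avoids !mnmDE !addn_eq0.
by case: sx; case: sy; case: (m1 i0 == 0%N); case: (m1 i1 == 0%N); rewrite /= ?andbT ?andbF.
Qed.

Lemma avoids0 sx sy : avoids sx sy 0%MM.
Proof. by rewrite /avoids !mnm0E; case: sx; case: sy. Qed.

Lemma monoXY_n0 (K : fieldType) n : monoXY K n 0 = varx K ^+ n.
Proof. by rewrite /monoXY expr0 mulr1. Qed.

Lemma monoXY_0n (K : fieldType) n : monoXY K 0 n = vary K ^+ n.
Proof. by rewrite /monoXY expr0 mul1r. Qed.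

Section UpperBound.
Variables (K : fieldType) (a b : seq nat).
Local Notation J := (@monideal K a b).
Hypothesis size_pos : (0 < size a)%N.
Hypothesis a_decr : forall i, (i.+1 < size a)%N -> (nth 0 a i.+1 < nth 0 a i)%N.
Hypothesis b_incr : forall i, (i.+1 < size a)%N -> (nth 0 b i < nth 0 b i.+1)%N.

Lemma colon_monoXY_prime p q sx sy :
  (forall m : 'X_{1..2}, stair a b (p + m i0)%N (q + m i1)%N = ~~ avoids sx sy m) ->
  is_prime_ideal (colon J (monoXY K p q)).
Proof.
move=> hstair; apply: (mproj_kernel_prime (@avoids_add sx sy) (avoids0 sx sy)) => g.
rewrite /colon monideal_mulXY mproj_eq0P.
by split=> /allP h; apply/allP => u /h; rewrite hstair.
Qed.

Lemma monoXY_assoc p q sx sy :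
  (forall m : 'X_{1..2}, stair a b (p + m i0)%N (q + m i1)%N = ~~ avoids sx sy m) ->
  exists f : {mpoly K[2]}, f \is (p + q)%N.-homog /\ is_assoc J (colon J f).
Proof.
move=> hstair; exists (monoXY K p q); split.
  by rewrite monoXYE dhomogE msuppX /= mdeg2 mxy0 mxy1 eqxx.
by split; [exact: colon_monoXY_prime hstair | exists (monoXY K p q)].
Qed.

Lemma vnumber_attained : vcands a b != [::] ->
  exists f : {mpoly K[2]}, f \is (seqmin (vcands a b)).-homog /\ is_assoc J (colon J f).
Proof.
move/seqmin_mem; set v := seqmin _; rewrite /vcands !mem_cat => /orP [|/orP []].
- case: ifP => // /eqP b0; rewrite inE => /eqP ->.
  rewrite (_ : _ - 1 = nth 0 a 0 + (nth 0 b 0 - 1))%N; last lia.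
  apply: (@monoXY_assoc _ _ false true) => m /=.
  by rewrite /avoids /= stair_shift_x //; apply/idP/idP; lia.
- case: ifP => // /eqP al; rewrite inE => /eqP ->.
  rewrite (_ : _ - 1 = (nth 0 a (size a).-1 - 1) + nth 0 b (size a).-1)%N; last lia.
  apply: (@monoXY_assoc _ _ true false) => m /=.
  by rewrite /avoids /= andbT addnC stair_shift_y //; apply/idP/idP; lia.
- case/mapP => i; rewrite mem_iota => hi ->; have hi1 : (i.+1 < size a)%N by lia.
  have := a_decr hi1; have := b_incr hi1 => bi ai.
  rewrite (_ : _ - 2 = (nth 0 a i - 1) + (nth 0 b i.+1 - 1))%N; last lia.
  apply: (@monoXY_assoc _ _ true true) => m.
  by rewrite (stair_inner a_decr b_incr) // /avoids /= negb_and.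
Qed.
End UpperBound.

Section LowerBound.
Variables (K : fieldType) (a b : seq nat) (f : {mpoly K[2]}) (d : nat).
Local Notation J := (@monideal K a b).
Local Notation lst := (size a).-1.
Hypothesis size_pos : (0 < size a)%N.
Hypothesis a_decr : forall i, (i.+1 < size a)%N -> (nth 0 a i.+1 < nth 0 a i)%N.
Hypothesis b_incr : forall i, (i.+1 < size a)%N -> (nth 0 b i < nth 0 b i.+1)%N.
Hypothesis f_homog : f \is d.-homog.
Hypothesis colon_prime : is_prime_ideal (colon J f).

Lemma supp_deg u : u \in msupp f -> (u i0 + u i1)%N = d.
Proof. by move=> hu; rewrite -mdeg2; move/dhomogP: f_homog; apply. Qed.

Lemma colon_monoXYP p q :
  colon J f (monoXY K p q) <->
  all (fun u : 'X_{1..2} => stair a b (p + u i0)%N (q + u i1)%N) (msupp f).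
Proof. by rewrite /colon mulrC; apply: monideal_mulXY. Qed.

Lemma colon_monoXY_in p q u : colon J f (monoXY K p q) ->
  u \in msupp f -> stair a b (p + u i0)%N (q + u i1)%N.
Proof. by move/colon_monoXYP/allP; apply. Qed.

Lemma colon_monoXY_out p q : ~ colon J f (monoXY K p q) ->
  exists2 u, u \in msupp f & ~~ stair a b (p + u i0)%N (q + u i1)%N.
Proof. by move=> h; apply/allPn/negP => /colon_monoXYP. Qed.

Lemma colon_dec g : colon J f g \/ ~ colon J f g.
Proof.
rewrite /colon; case: (boolP (supp_in_stair a b (g * f))) => h.
  by left; apply/monidealP.
by right => /monidealP; apply/negP.
Qed.

(* Since x^{a_1} y^{b_1} lies in the prime (I : f), so does x or y. *)
Lemma colon_x_or_y : colon J f (varx K) \/ colon J f (vary K).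
Proof.
have gen : colon J f (monoXY K (nth 0 a 0) (nth 0 b 0)).
  apply/colon_monoXYP/allP => u _; apply: stair_mono (leq_addr _ _) (leq_addr _ _) _.
  by apply/stairP; exists 0%N.
have [_ [_ Pmul]] := colon_prime.
by case: (Pmul _ _ gen) => /(prime_ideal_pow colon_prime); [left | right].
Qed.

(* Both x and y in (I : f): a monomial of f outside I is an inner corner. *)
Lemma lower_inner : colon J f (varx K) -> colon J f (vary K) ->
  (seqmin (vcands a b) <= d)%N.
Proof.
rewrite -(expr1 (varx K)) -(expr1 (vary K)) -monoXY_n0 -monoXY_0n => hx hy.
have [u hu nu] : exists2 u, u \in msupp f & ~~ stair a b (0 + u i0)%N (0 + u i1)%N.
  by apply: colon_monoXY_out; rewrite /monoXY !expr0 mulr1; case: colon_prime => _ [].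
have := colon_monoXY_in hx hu; have := colon_monoXY_in hy hu; rewrite !add0n !add1n in nu *.
move=> y_in x_in; have [k hk le_k] := stair_inner_corner a_decr b_incr nu x_in y_in.
by rewrite -(supp_deg hu); apply: leq_trans le_k; apply/seqmin_le/vcands_inner.
Qed.

(* Only x in (I : f): y^{b_m} is not, which places a monomial of f next to
   the last column. *)
Lemma lower_x_only : colon J f (varx K) -> ~ colon J f (vary K) ->
  (seqmin (vcands a b) <= d)%N.
Proof.
move=> hx hy; have /colon_monoXY_out [w hw] : ~ colon J f (monoXY K 0 (nth 0 b lst)).
  by rewrite monoXY_0n => /(prime_ideal_pow colon_prime).
rewrite stair_shift_y // add0n -ltnNge => w_lt.
move: hx; rewrite -(expr1 (varx K)) -monoXY_n0 => /colon_monoXY_in /(_ hw).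
rewrite add1n add0n => x_in; have [al le_w] := stair_last_corner a_decr size_pos w_lt x_in.
by rewrite -(supp_deg hw); apply: leq_trans le_w; apply/seqmin_le/vcands_last.
Qed.

(* Only y in (I : f): symmetric, at the first row. *)
Lemma lower_y_only : ~ colon J f (varx K) -> colon J f (vary K) ->
  (seqmin (vcands a b) <= d)%N.
Proof.
move=> hx hy; have /colon_monoXY_out [w hw] : ~ colon J f (monoXY K (nth 0 a 0) 0).
  by rewrite monoXY_n0 => /(prime_ideal_pow colon_prime).
rewrite stair_shift_x // add0n -ltnNge => w_lt.
move: hy; rewrite -(expr1 (vary K)) -monoXY_0n => /colon_monoXY_in /(_ hw).
rewrite add1n add0n => y_in; have [b0 le_w] := stair_first_corner b_incr w_lt y_in.
by rewrite -(supp_deg hw); apply: leq_trans le_w; apply/seqmin_le/vcands_first.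
Qed.

Lemma vnumber_lower : (seqmin (vcands a b) <= d)%N.
Proof.
have [hx | hx] := colon_dec (varx K); have [hy | hy] := colon_dec (vary K).
- exact: lower_inner.
- exact: lower_x_only.
- exact: lower_y_only.
- by case: colon_x_or_y.
Qed.
End LowerBound.

(* Theorem 5.6: I proper means (0,0) lies outside the staircase, so the
   candidate list is nonempty; the two bounds then identify v(I). *)
Theorem theorem5p6 (K : fieldType) (a b : seq nat) :
  (0 < size a)%N ->
  size b = size a ->
  (forall i, (i.+1 < size a)%N -> (nth 0%N a i.+1 < nth 0%N a i)%N) ->
  (forall i, (i.+1 < size a)%N -> (nth 0%N b i < nth 0%N b i.+1)%N) ->
  ~ @monideal K a b 1%R ->
  vnumber_is (@monideal K a b) (seqmin (vcands a b)).
Proof.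
move=> size_pos _ a_decr b_incr J1.
have out00 : ~~ stair a b 0 0.
  apply: contra_notN J1 => in00; apply/monidealP.
  by rewrite -mpolyX0 /supp_in_stair msuppX /= andbT /in_stair !mnm0E.
split.
- exact: vnumber_attained (vcands_nonempty size_pos out00).
- by move=> d f hf [hP _]; apply: vnumber_lower hP.
Qed.
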